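(* For any frame $L$, the poset $\overline{\mathrm{IC}}(L)$ is order-isomorphic to $\{g\in\mathrm{IC}(L)\mid \boldsymbol{-1}\le g\le\boldsymbol{1}\}$.
   Context: $\mathbb{Q}$ is the rationals. The frame of extended partial reals $\mathfrak{L}(\overline{\mathbb{IR}})$ is the frame presented by generators $(r,\textsf{---})$, $(\textsf{---},s)$ ($r,s\in\mathbb{Q}$) subject to (r1) $(r,\textsf{---})\wedge(\textsf{---},s)=0$ whenever $r\ge s$; (r3) $(r,\textsf{---})=\bigvee_{s>r}(s,\textsf{---})$; (r4) $(\textsf{---},s)=\bigvee_{r<s}(\textsf{---},r)$. The frame of partial reals $\mathfrak{L}(\mathbb{IR})$ is obtained by adding the relations (r5) $\bigvee_r(r,\textsf{---})=1$ and (r6) $\bigvee_s(\textsf{---},s)=1$. $\overline{\mathrm{IC}}(L)$ (resp. $\mathrm{IC}(L)$) is the set of frame homomorphisms $\mathfrak{L}(\overline{\mathbb{IR}})\to L$ (resp. $\mathfrak{L}(\mathbb{IR})\to L$), ordered by $f\le g$ iff $f(r,\textsf{---})\le g(r,\textsf{---})$ and $g(\textsf{---},s)\le f(\textsf{---},s)$ for all $r,s\in\mathbb{Q}$. For $q\in\mathbb{Q}$, the constant $\boldsymbol{q}\in\mathrm{IC}(L)$ is given by $\boldsymbol{q}(p,\textsf{---})=1$ if $p<q$ and $0$ otherwise, $\boldsymbol{q}(\textsf{---},p)=1$ if $p>q$ and $0$ otherwise. *)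

From mathcomp Require Import all_boot all_order all_algebra.
Set Implicit Arguments. Unset Strict Implicit. Unset Printing Implicit Defensive.
Import Order.TTheory GRing.Theory Num.Theory.
Local Open Scope ring_scope.

Record Frame := {
  carrier :> Type;
  fle : carrier -> carrier -> Prop;
  fle_refl : forall x, fle x x;
  fle_trans : forall x y z, fle x y -> fle y z -> fle x z;
  fle_anti : forall x y, fle x y -> fle y x -> x = y;
  fjoin : (carrier -> Prop) -> carrier;
  fjoin_ub : forall (P : carrier -> Prop) x, P x -> fle x (fjoin P);
  fjoin_least : forall (P : carrier -> Prop) y,
      (forall x, P x -> fle x y) -> fle (fjoin P) y;
  fmeet : carrier -> carrier -> carrier;
  fmeet_l : forall a b, fle (fmeet a b) a;
  fmeet_r : forall a b, fle (fmeet a b) b;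
  fmeet_glb : forall a b c, fle c a -> fle c b -> fle c (fmeet a b);
  ftop : carrier;
  ftop_max : forall x, fle x ftop;
  fbot : carrier;
  fbot_min : forall x, fle fbot x;
  fmeet_join_distr : forall a (P : carrier -> Prop),
      fmeet a (fjoin P) = fjoin (fun y => exists x, P x /\ y = fmeet a x)
}.

Definition fsup (L : Frame) (I : Type) (C : I -> Prop) (F : I -> L) : L :=
  fjoin (fun y => exists i, C i /\ y = F i).

(* An assignment of the generators (r,---) and (---,s), r,s : rat, into L.
   By the universal property of a frame presentation, frame homomorphisms
   from the presented frame into L are exactly the assignments that respect
   the defining relations. *)
Record genmap (L : Frame) := GenMap {
  gup : rat -> L;    (* image of (r,---) *)
  gdown : rat -> L   (* image of (---,s) *)
}.

(* relations (r1), (r3), (r4): frame homs L(extended IR) -> L *)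
Definition is_ICbar (L : Frame) (f : genmap L) : Prop :=
  (forall r s : rat, s <= r -> fmeet (gup f r) (gdown f s) = fbot L) /\
  (forall r : rat, gup f r = fsup (fun s : rat => r < s) (gup f)) /\
  (forall s : rat, gdown f s = fsup (fun r : rat => r < s) (gdown f)).

(* additionally (r5), (r6): frame homs L(IR) -> L *)
Definition is_IC (L : Frame) (f : genmap L) : Prop :=
  is_ICbar f /\
  fsup (fun _ : rat => True) (gup f) = ftop L /\
  fsup (fun _ : rat => True) (gdown f) = ftop L.

Definition gle (L : Frame) (f g : genmap L) : Prop :=
  (forall r : rat, fle (gup f r) (gup g r)) /\
  (forall s : rat, fle (gdown g s) (gdown f s)).

Definition gconst (L : Frame) (q : rat) : genmap L :=
  GenMap (fun p : rat => if p < q then ftop L else fbot L)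
         (fun p : rat => if q < p then ftop L else fbot L).

Definition ICbar (L : Frame) := {f : genmap L | is_ICbar f}.
Definition IC (L : Frame) := {f : genmap L | is_IC f}.

Definition IC_bounded (L : Frame) :=
  {g : genmap L | is_IC g /\ gle (gconst L (-1)) g /\ gle g (gconst L 1)}.

From mathcomp Require Import all_boot all_order all_algebra.
From mathcomp Require Import ring lra.
From Stdlib Require Import FunctionalExtensionality ProofIrrelevance.
Set Implicit Arguments. Unset Strict Implicit. Unset Printing Implicit Defensive.
Import Order.TTheory GRing.Theory Num.Theory.
Local Open Scope ring_scope.

(* Fix an order isomorphism t from Q onto the rationals of the open interval
   (lo, hi); for (-1, 1) take t x = x / (1 + |x|).  A frame map f of the
   extended partial reals is transported to g with g(p,---) = 1 for p < lo and
   g(p,---) = \/{f(a,---) | p < t a} for p >= lo, dually for (---,s).  Such a g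
   lies between lo and hi, and roundedness (r3), (r4) of f gives back f as
   g o t.  Conversely a g between lo and hi has g(p,---) = 0 for p >= hi and
   g(---,s) = 0 for s <= lo, so by roundedness it is rebuilt from g o t. *)

Section FrameLemmas.
Variable L : Frame.

Lemma fle_bot (a : L) : fle a (fbot L) -> a = fbot L.
Proof. by move=> h; apply: fle_anti h (fbot_min _). Qed.

Lemma ftop_le (a : L) : fle (ftop L) a -> a = ftop L.
Proof. by move=> h; apply: fle_anti (ftop_max _) h. Qed.

Lemma fmeetC (a b : L) : fmeet a b = fmeet b a.
Proof. by apply: fle_anti; apply: fmeet_glb; (apply: fmeet_l || apply: fmeet_r). Qed.

Lemma fsup_ub I (C : I -> Prop) (F : I -> L) i : C i -> fle (F i) (fsup C F).
Proof. by move=> Ci; apply: fjoin_ub; exists i. Qed.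

Lemma fsup_least I (C : I -> Prop) (F : I -> L) y :
  (forall i, C i -> fle (F i) y) -> fle (fsup C F) y.
Proof. by move=> H; apply: fjoin_least => _ [i [Ci ->]]; apply: H. Qed.

Lemma fsup_sub I (C D : I -> Prop) (F : I -> L) :
  (forall i, C i -> D i) -> fle (fsup C F) (fsup D F).
Proof. by move=> CD; apply: fsup_least => i /CD; apply: fsup_ub. Qed.

Lemma eq_fsup I (C D : I -> Prop) (F : I -> L) :
  (forall i, C i <-> D i) -> fsup C F = fsup D F.
Proof. by move=> CD; apply: fle_anti; apply: fsup_sub => i /CD. Qed.

Lemma fsup_mono I (C : I -> Prop) (F G : I -> L) :
  (forall i, C i -> fle (F i) (G i)) -> fle (fsup C F) (fsup C G).
Proof.
move=> FG; apply: fsup_least => i Ci.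
exact: fle_trans (FG i Ci) (fsup_ub _ Ci).
Qed.

Lemma fsup0 I (C : I -> Prop) (F : I -> L) : (forall i, ~ C i) -> fsup C F = fbot L.
Proof. by move=> C0; apply: fle_bot; apply: fsup_least => i /C0. Qed.

Lemma fsup_top I (C : I -> Prop) (F : I -> L) i :
  C i -> F i = ftop L -> fsup C F = ftop L.
Proof. by move=> Ci Fi; apply: ftop_le; rewrite -Fi; apply: fsup_ub. Qed.

Lemma fmeet_fsup_bot I J (C : I -> Prop) (D : J -> Prop) (F : I -> L) (G : J -> L) :
  (forall i j, C i -> D j -> fmeet (F i) (G j) = fbot L) ->
  fmeet (fsup C F) (fsup D G) = fbot L.
Proof.
move=> FG; apply: fle_bot; rewrite {2}/fsup fmeet_join_distr.
apply: fjoin_least => _ [_ [[j [Dj ->]] ->]].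
rewrite fmeetC /fsup fmeet_join_distr; apply: fjoin_least => _ [_ [[i [Ci ->]] ->]].
by rewrite fmeetC FG //; apply: fle_refl.
Qed.

Definition up_rounded (u : rat -> L) := forall r, u r = fsup (fun s => r < s) u.
Definition down_rounded (d : rat -> L) := forall s, d s = fsup (fun r => r < s) d.

Lemma genmap_ext (f g : genmap L) : gup f =1 gup g -> gdown f =1 gdown g -> f = g.
Proof.
case: f g => [u d] [u' d'] /= uu' dd'.
by congr GenMap; apply: functional_extensionality.
Qed.

Lemma up_rounded_anti u : up_rounded u -> forall r s, r < s -> fle (u s) (u r).
Proof. by move=> ru r s rs; rewrite (ru r); apply: fsup_ub. Qed.

Lemma down_rounded_mono d : down_rounded d -> forall r s, r < s -> fle (d r) (d s).
Proof. by move=> rd r s rs; rewrite (rd s); apply: fsup_ub. Qed.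

Lemma gconst_le q (g : genmap L) : gle (gconst L q) g <->
  (forall p, p < q -> gup g p = ftop L) /\ (forall p, p <= q -> gdown g p = fbot L).
Proof.
split=> [[hu hd] | [hu hd]]; split=> p.
- by move=> pq; have := hu p; rewrite /= pq => /ftop_le.
- by move=> pq; have := hd p; rewrite /= ltNge pq => /fle_bot.
- by rewrite /=; case: ifP => [/hu -> | _]; [apply: fle_refl | apply: fbot_min].
- by rewrite /=; case: ltP => [_ | /hd ->]; [apply: ftop_max | apply: fle_refl].
Qed.

Lemma le_gconst q (g : genmap L) : gle g (gconst L q) <->
  (forall p, q <= p -> gup g p = fbot L) /\ (forall p, q < p -> gdown g p = ftop L).
Proof.
split=> [[hu hd] | [hu hd]]; split=> p.
- by move=> qp; have := hu p; rewrite /= ltNge qp => /fle_bot.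
- by move=> qp; have := hd p; rewrite /= qp => /ftop_le.
- by rewrite /=; case: ltP => [_ | /hu ->]; [apply: ftop_max | apply: fle_refl].
- by rewrite /=; case: ifP => [/hd -> | _]; [apply: fle_refl | apply: fbot_min].
Qed.

End FrameLemmas.

Section Transport.
Variables (L : Frame) (lo hi : rat) (t : rat -> rat).
Hypothesis t_mono : {mono t : x y / x <= y}.
Hypothesis t_range : forall x, lo < t x < hi.
Hypothesis t_onto : forall y, lo < y < hi -> exists x, t x = y.

Let t_ltE : {mono t : x y / x < y} := leW_mono t_mono.
Let t_gt x : lo < t x := (andP (t_range x)).1.
Let t_lt x : t x < hi := (andP (t_range x)).2.
Let lo_lt_hi : lo < hi := lt_trans (t_gt 0) (t_lt 0).

Definition ext_up (u : rat -> L) (p : rat) : L :=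
  if p < lo then ftop L else fsup (fun a => p < t a) u.

Definition ext_down (d : rat -> L) (p : rat) : L :=
  if hi < p then ftop L else fsup (fun a => t a < p) d.

Definition extend (f : genmap L) : genmap L :=
  GenMap (ext_up (gup f)) (ext_down (gdown f)).

Definition restrict (g : genmap L) : genmap L :=
  GenMap (gup g \o t) (gdown g \o t).

Lemma ext_up_lt p u : p < lo -> ext_up u p = ftop L.
Proof. by rewrite /ext_up => ->. Qed.

Lemma ext_up_ge p u : hi <= p -> ext_up u p = fbot L.
Proof.
move=> hip; rewrite /ext_up ltNge (le_trans (ltW lo_lt_hi) hip) /=.
by apply: fsup0 => a; apply/negP; rewrite -leNgt (le_trans (ltW (t_lt a))).
Qed.

Lemma ext_down_gt p d : hi < p -> ext_down d p = ftop L.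
Proof. by rewrite /ext_down => ->. Qed.

Lemma ext_down_le p d : p <= lo -> ext_down d p = fbot L.
Proof.
move=> plo; rewrite /ext_down ltNge (le_trans plo (ltW lo_lt_hi)) /=.
by apply: fsup0 => a; apply/negP; rewrite -leNgt (le_trans plo (ltW (t_gt a))).
Qed.

Lemma ext_up_t u r : up_rounded u -> ext_up u (t r) = u r.
Proof.
move=> ru; rewrite /ext_up ltNge (ltW (t_gt r)) (ru r).
by apply: eq_fsup => a; rewrite t_ltE.
Qed.

Lemma ext_down_t d r : down_rounded d -> ext_down d (t r) = d r.
Proof.
move=> rd; rewrite /ext_down ltNge (ltW (t_lt r)) (rd r).
by apply: eq_fsup => a; rewrite t_ltE.
Qed.

(* For p >= lo only the indices s in (p, hi) matter, and these are exactly the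
   t a with p < t a. *)
Lemma up_rounded_t u p : up_rounded u -> (forall q, hi <= q -> u q = fbot L) ->
  lo <= p -> u p = fsup (fun a => p < t a) (u \o t).
Proof.
move=> ru u0 lop; apply: fle_anti; last first.
  by apply: fsup_least => a /(up_rounded_anti ru).
rewrite (ru p); apply: fsup_least => q pq.
have [qhi | hiq] := ltP q hi; last by rewrite u0 //; apply: fbot_min.
have [a ta] : exists a, t a = q by apply: t_onto; rewrite qhi (le_lt_trans lop pq).
by rewrite -ta in pq *; apply: (fsup_ub (u \o t) pq).
Qed.

Lemma down_rounded_t d p : down_rounded d -> (forall q, q <= lo -> d q = fbot L) ->
  p <= hi -> d p = fsup (fun a => t a < p) (d \o t).
Proof.
move=> rd d0 phi; apply: fle_anti; last first.
  by apply: fsup_least => a /(down_rounded_mono rd).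
rewrite (rd p); apply: fsup_least => q qp.
have [loq | qlo] := ltP lo q; last by rewrite d0 //; apply: fbot_min.
have [a ta] : exists a, t a = q by apply: t_onto; rewrite loq (lt_le_trans qp phi).
by rewrite -ta in qp *; apply: (fsup_ub (d \o t) qp).
Qed.

Lemma ext_up_rounded u : up_rounded u -> up_rounded (ext_up u).
Proof.
move=> ru p; have [plo | lop] := ltP p lo.
  rewrite ext_up_lt //; apply: esym; apply: (fsup_top (i := (p + lo) / 2)).
    by rewrite /=; lra.
  by rewrite ext_up_lt //; lra.
rewrite {1}/ext_up ltNge lop /=; apply: fle_anti.
  by apply: fsup_least => a pa; rewrite -ext_up_t //; apply: (fsup_ub (ext_up u) pa).
apply: fsup_least => s ps; rewrite /ext_up ltNge (ltW (le_lt_trans lop ps)) /=.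
by apply: fsup_sub => a /(lt_trans ps).
Qed.

Lemma ext_down_rounded d : down_rounded d -> down_rounded (ext_down d).
Proof.
move=> rd p; have [hip | phi] := ltP hi p.
  rewrite ext_down_gt //; apply: esym; apply: (fsup_top (i := (p + hi) / 2)).
    by rewrite /=; lra.
  by rewrite ext_down_gt //; lra.
rewrite {1}/ext_down ltNge phi /=; apply: fle_anti.
  by apply: fsup_least => a ap; rewrite -ext_down_t //; apply: (fsup_ub (ext_down d) ap).
apply: fsup_least => s sp; rewrite /ext_down ltNge (ltW (lt_le_trans sp phi)) /=.
by apply: fsup_sub => a /lt_trans; apply.
Qed.

Lemma extend_IC f : is_ICbar f -> is_IC (extend f).
Proof.
case=> disj [ru rd]; split; [split; [|split] | split] => /=.
- move=> r s sr; have [hir | rhi] := leP hi r.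
    by rewrite ext_up_ge //; apply: fle_bot; apply: fmeet_l.
  have [slo | los] := leP s lo.
    by rewrite ext_down_le //; apply: fle_bot; apply: fmeet_r.
  rewrite /ext_up /ext_down !ltNge (ltW (lt_le_trans los sr)) (le_trans sr (ltW rhi)) /=.
  apply: fmeet_fsup_bot => a b ra bs; apply: disj.
  by rewrite -t_mono ltW // (lt_le_trans bs (le_trans sr (ltW ra))).
- exact: ext_up_rounded.
- exact: ext_down_rounded.
- by apply: (fsup_top (i := lo - 1)) => //; rewrite ext_up_lt //; lra.
- by apply: (fsup_top (i := hi + 1)) => //; rewrite ext_down_gt //; lra.
Qed.

Lemma extend_bounded f : gle (gconst L lo) (extend f) /\ gle (extend f) (gconst L hi).
Proof.
split; [apply/gconst_le | apply/le_gconst]; split=> p /=.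
- exact: ext_up_lt.
- exact: ext_down_le.
- exact: ext_up_ge.
- exact: ext_down_gt.
Qed.

Section Bounded.
Variable g : genmap L.
Hypothesis g_ICbar : is_ICbar g.
Hypothesis g_lo : gle (gconst L lo) g.
Hypothesis g_hi : gle g (gconst L hi).

Lemma restrict_ICbar : is_ICbar (restrict g).
Proof.
case: g_ICbar => disj [ru rd]; have [_ d0] := (gconst_le lo g).1 g_lo.
have [u0 _] := (le_gconst hi g).1 g_hi.
split; [|split] => r /=.
- by move=> s sr; apply: disj; rewrite t_mono.
- rewrite (up_rounded_t ru u0 (ltW (t_gt r))).
  by apply: eq_fsup => a; rewrite t_ltE.
- rewrite (down_rounded_t rd d0 (ltW (t_lt r))).
  by apply: eq_fsup => a; rewrite t_ltE.
Qed.

Lemma restrictK : extend (restrict g) = g.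
Proof.
case: g_ICbar => _ [ru rd]; have [u1 d0] := (gconst_le lo g).1 g_lo.
have [u0 d1] := (le_gconst hi g).1 g_hi.
apply: genmap_ext => p /=.
- rewrite /ext_up; case: ltP => [/u1 -> // | lop].
  by rewrite (up_rounded_t ru u0 lop).
- rewrite /ext_down; case: ltP => [/d1 -> // | phi].
  by rewrite (down_rounded_t rd d0 phi).
Qed.

End Bounded.

Lemma extendK f : is_ICbar f -> restrict (extend f) = f.
Proof.
by case=> _ [ru rd]; apply: genmap_ext => r /=; [apply: ext_up_t | apply: ext_down_t].
Qed.

Lemma extend_mono f g : gle f g -> gle (extend f) (extend g).
Proof.
case=> hu hd; split=> p /=; rewrite /ext_up /ext_down;
  by case: ifP => _; [apply: fle_refl | apply: fsup_mono].
Qed.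

Lemma restrict_mono f g : gle f g -> gle (restrict f) (restrict g).
Proof. by case=> hu hd; split=> r /=. Qed.

Lemma ICbar_iso_bounded :
  exists phi : ICbar L -> {g | is_IC g /\ gle (gconst L lo) g /\ gle g (gconst L hi)},
    bijective phi /\
    (forall f g : ICbar L,
        gle (proj1_sig f) (proj1_sig g) <->
        gle (proj1_sig (phi f)) (proj1_sig (phi g))).
Proof.
exists (fun f => exist _ (extend (proj1_sig f))
  (conj (extend_IC (proj2_sig f)) (extend_bounded _))).
split.
- exists (fun g => exist _ (restrict (proj1_sig g))
    (let: conj (conj g_ICbar _) (conj g_lo g_hi) := proj2_sig g in
     restrict_ICbar g_ICbar g_lo g_hi)).
  + by move=> [f f_ICbar]; apply: subset_eq_compat; apply: extendK.
  + by move=> [g [[g_ICbar ?] [g_lo g_hi]]]; apply: subset_eq_compat; apply: restrictK.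
- move=> [f f_ICbar] [g g_ICbar] /=; split; first exact: extend_mono.
  by move/restrict_mono; rewrite !extendK.
Qed.

End Transport.

Definition squash (x : rat) : rat := x / (1 + `|x|).

Lemma squash_homo : {homo squash : x y / x < y}.
Proof.
move=> x y xy; rewrite /squash -subr_gt0.
have hx : 0 < 1 + `|x| by rewrite ltr_pwDl.
have hy : 0 < 1 + `|y| by rewrite ltr_pwDl.
have -> : y / (1 + `|y|) - x / (1 + `|x|) =
  (y * (1 + `|x|) - x * (1 + `|y|)) / ((1 + `|x|) * (1 + `|y|)).
  by field; rewrite !gt_eqF.
apply: divr_gt0; last exact: mulr_gt0.
by case: (lerP 0 x) => hx0; case: (lerP 0 y) => hy0;
  rewrite ?(ger0_norm hx0) ?(ger0_norm hy0) ?(ltr0_norm hx0) ?(ltr0_norm hy0); nra.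
Qed.

Lemma squash_range x : -1 < squash x < 1.
Proof.
have hx : 0 < 1 + `|x| by rewrite ltr_pwDl.
rewrite /squash ltr_pdivlMr // ltr_pdivrMr //.
by case: (lerP 0 x) => hx0; rewrite ?(ger0_norm hx0) ?(ltr0_norm hx0); apply/andP; lra.
Qed.

Lemma squash_onto y : -1 < y < 1 -> exists x, squash x = y.
Proof.
case/andP=> h1 h2; exists (y / (1 - `|y|)); rewrite /squash.
case: (lerP 0 y) => hy0; rewrite ?(ger0_norm hy0) ?(ltr0_norm hy0).
- have hy : 0 < 1 - y by lra.
  rewrite ger0_norm ?divr_ge0 ?(ltW hy) //.
  by field; rewrite gt_eqF //= addrNK oner_eq0.
- have hy : 0 < 1 + y by lra.
  rewrite opprK ltr0_norm ?pmulr_llt0 ?invr_gt0 // -mulNr.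
  by field; rewrite gt_eqF //= addrK oner_eq0.
Qed.

Theorem proposition3p1 (L : Frame) :
  exists phi : ICbar L -> IC_bounded L,
    bijective phi /\
    (forall f g : ICbar L,
        gle (proj1_sig f) (proj1_sig g) <->
        gle (proj1_sig (phi f)) (proj1_sig (phi g))).
Proof. exact: ICbar_iso_bounded (le_mono squash_homo) squash_range squash_onto. Qed.
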